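(* Fix $\mu>0$. As $D\to\infty$ through odd integers, the probability mass function of $\mathrm{MedPois}_\mu^{(D)}$ converges pointwise on $\mathbb{N}_0$ to one of the following: (i) a point mass $\delta_m$ with $m\in\{\lfloor\mu\rfloor,\lceil\mu\rceil\}$; or (ii) the discrete uniform distribution on two consecutive integers $\{m,m+1\}$ with $\{m,m+1\}\cap\{\lfloor\mu\rfloor,\lceil\mu\rceil\}\neq\emptyset$.
   Context: For odd $D$, $\mathrm{MedPois}_\mu^{(D)}$ is the law of the sample median, i.e. the $\lceil D/2\rceil$-th smallest, of $D$ i.i.d. Poisson($\mu$) random variables. *)

From Stdlib Require Import Arith Reals Lra Lia.
Open Scope R_scope.

Fixpoint sumR (n : nat) (f : nat -> R) : R :=
  match n with
  | O => 0
  | S n' => sumR n' f + f n'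
  end.

Definition pois_pmf (mu : R) (j : nat) : R :=
  exp (- mu) * mu ^ j / INR (Factorial.fact j).

Definition pois_lt (mu : R) (k : nat) : R := sumR k (pois_pmf mu).

Definition pois_gt (mu : R) (k : nat) : R := 1 - pois_lt mu k - pois_pmf mu k.

Definition multinom (a b c : nat) : R :=
  INR (Factorial.fact (a + b + c)) / (INR (Factorial.fact a) * INR (Factorial.fact b) * INR (Factorial.fact c)).

(* Law of the sample median of D = 2n+1 i.i.d. Poisson(mu) variables,
   i.e. the (n+1)-th = ceil(D/2)-th smallest.  The median equals k iff,
   writing a = #{i | X_i < k}, b = #{i | X_i = k}, c = #{i | X_i > k}
   (a + b + c = D), we have a <= n and a + b >= n+1.  The count vector
   (a,b,c) is multinomial(D; P(X<k), P(X=k), P(X>k)). *)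
Definition medpois_pmf (mu : R) (n : nat) (k : nat) : R :=
  let D := (2 * n + 1)%nat in
  sumR (S n) (fun a =>
    sumR (S (D - a)) (fun b =>
      if Nat.leb (S n) (a + b) then
        let c := (D - a - b)%nat in
        multinom a b c * pois_lt mu k ^ a * pois_pmf mu k ^ b * pois_gt mu k ^ c
      else 0)).

Definition is_floor (mu : R) (m : nat) : Prop := INR m <= mu < INR m + 1.
Definition is_ceil (mu : R) (m : nat) : Prop := INR m - 1 < mu <= INR m.
Definition floor_or_ceil (mu : R) (m : nat) : Prop := is_floor mu m \/ is_ceil mu m.

Definition point_mass (m : nat) : nat -> R :=
  fun k => if Nat.eqb k m then 1 else 0.

Definition unif2 (m : nat) : nat -> R :=
  fun k => if orb (Nat.eqb k m) (Nat.eqb k (S m)) then 1/2 else 0.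

From Stdlib Require Import Arith Reals Lra Lia.
From Coquelicot Require Import Coquelicot.
Open Scope R_scope.

(* Write F(k) = [pois_lt mu k] = P(X < k) for X ~ Poisson(mu), and
   G_n(s) = [bin_majority n s] = P(Bin(2n+1, s) > n).  The median of 2n+1
   samples is < k iff more than n of them are < k, so
   P(med = k) = G_n(F(k+1)) - G_n(F(k)).  From G_n(s) + G_n(1-s) = 1 and
   G_n(s) <= 2s (4s(1-s))^n, G_n(s) tends to 0, 1/2 or 1 according as s is
   <, = or > 1/2.  Hence if F(m) < 1/2 <= F(m+1), the limit law is the point
   mass at m when F(m+1) > 1/2 and uniform on {m, m+1} when F(m+1) = 1/2.
   Such an m is floor(mu) or ceil(mu), because F(f) < 1/2 for integers
   f <= mu and F(n+1) >= 1/2 for integers n >= mu. *)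

Lemma sumR_ext n f g : (forall i, (i < n)%nat -> f i = g i) -> sumR n f = sumR n g.
Proof.
  induction n as [|n IH]; intros Hfg; simpl; [reflexivity|].
  rewrite IH by (intros; apply Hfg; lia). rewrite Hfg by lia. reflexivity.
Qed.

Lemma sumR_plus n f g : sumR n (fun i => f i + g i) = sumR n f + sumR n g.
Proof. induction n as [|n IH]; simpl; [|rewrite IH]; ring. Qed.

Lemma sumR_scal n c f : sumR n (fun i => c * f i) = c * sumR n f.
Proof. induction n as [|n IH]; simpl; [|rewrite IH]; ring. Qed.

Lemma sumR_add m n f : sumR (m + n) f = sumR m f + sumR n (fun i => f (m + i)%nat).
Proof.
  induction n as [|n IH]; simpl; [rewrite Nat.add_0_r; ring|].
  rewrite Nat.add_succ_r. simpl. rewrite IH. ring.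
Qed.

Lemma sumR_halves n f :
  sumR (S (2 * n + 1)) f = sumR (S n) f + sumR (S n) (fun i => f (S n + i)%nat).
Proof. replace (S (2 * n + 1)) with (S n + S n)%nat by lia. apply sumR_add. Qed.

Lemma sumR_succ_l n f : sumR (S n) f = f O + sumR n (fun i => f (S i)).
Proof. induction n as [|n IH]; simpl in *; [|rewrite IH]; ring. Qed.

Lemma sumR_le n f g : (forall i, (i < n)%nat -> f i <= g i) -> sumR n f <= sumR n g.
Proof.
  induction n as [|n IH]; intros Hfg; simpl; [lra|].
  apply Rplus_le_compat; [apply IH; intros|]; apply Hfg; lia.
Qed.

Lemma sumR_eq0 n f : (forall i, (i < n)%nat -> f i = 0) -> sumR n f = 0.
Proof.
  induction n as [|n IH]; intros Hf; simpl; [reflexivity|].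
  rewrite IH by (intros; apply Hf; lia). rewrite Hf by lia. ring.
Qed.

Lemma sumR_nonneg n f : (forall i, (i < n)%nat -> 0 <= f i) -> 0 <= sumR n f.
Proof. intros Hf. rewrite <- (sumR_eq0 n (fun _ => 0)) by auto. now apply sumR_le. Qed.

Lemma sumR_rev n f : sumR n f = sumR n (fun i => f (n - 1 - i)%nat).
Proof.
  induction n as [|n IH]; [reflexivity|].
  change (sumR (S n) f) with (sumR n f + f n). rewrite IH, sumR_succ_l.
  replace (S n - 1 - 0)%nat with n by lia.
  rewrite (sumR_ext n (fun i => f (S n - 1 - S i)%nat) (fun i => f (n - 1 - i)%nat))
    by (intros; f_equal; lia).
  ring.
Qed.

Lemma sumR_diag D (h : nat -> nat -> R) :
  sumR (S D) (fun a => sumR (S (D - a)) (fun b => h a (a + b)%nat)) =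
  sumR (S D) (fun j => sumR (S j) (fun a => h a j)).
Proof.
  induction D as [|D IH]; [simpl; ring|].
  change (sumR (S (S D)) (fun a => sumR (S (S D - a)) (fun b => h a (a + b)%nat)))
    with (sumR (S D) (fun a => sumR (S (S D - a)) (fun b => h a (a + b)%nat))
          + sumR (S (S D - S D)) (fun b => h (S D) (S D + b)%nat)).
  rewrite (sumR_ext (S D) _ (fun a => sumR (S (D - a)) (fun b => h a (a + b)%nat) + h a (S D))).
  - rewrite sumR_plus, IH. replace (S D - S D)%nat with O by lia. simpl.
    rewrite Nat.add_0_r. ring.
  - intros a Ha. replace (S D - a)%nat with (S (D - a)) by lia. simpl.
    replace (a + S (D - a))%nat with (S D) by lia. reflexivity.
Qed.

Lemma sumR_sum_f_R0 n f : sumR (S n) f = sum_f_R0 f n.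
Proof.
  induction n as [|n IH]; simpl; [ring|].
  change (sumR (S n) f + f (S n) = sum_f_R0 f n + f (S n)). now rewrite IH.
Qed.

Notation C := Binomial.C.

Lemma C_nonneg n k : 0 <= C n k.
Proof.
  unfold C. apply Rmult_le_pos; [apply pos_INR|].
  apply Rlt_le, Rinv_0_lt_compat, Rmult_lt_0_compat; apply INR_fact_lt_0.
Qed.

Lemma binomial_sumR x y N : sumR (S N) (fun i => C N i * x ^ i * y ^ (N - i)) = (x + y) ^ N.
Proof. now rewrite sumR_sum_f_R0, binomial. Qed.

Lemma multinom_C_sum a b c : multinom a b c = C (a + b + c) (a + b) * C (a + b) a.
Proof.
  unfold multinom, C.
  replace (a + b + c - (a + b))%nat with c by lia. replace (a + b - a)%nat with b by lia.
  pose proof (INR_fact_lt_0 a). pose proof (INR_fact_lt_0 b).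
  pose proof (INR_fact_lt_0 c). pose proof (INR_fact_lt_0 (a + b)).
  field. lra.
Qed.

Lemma multinom_C_first a b c : multinom a b c = C (a + b + c) a * C (b + c) b.
Proof.
  unfold multinom, C.
  replace (a + b + c - a)%nat with (b + c)%nat by lia. replace (b + c - b)%nat with c by lia.
  pose proof (INR_fact_lt_0 a). pose proof (INR_fact_lt_0 b).
  pose proof (INR_fact_lt_0 c). pose proof (INR_fact_lt_0 (b + c)).
  field. lra.
Qed.

(** * The binomial majority probability *)

Definition binom_pmf (D j : nat) (s : R) : R := C D j * s ^ j * (1 - s) ^ (D - j).

Definition bin_majority (n : nat) (s : R) : R :=
  sumR (S n) (fun i => binom_pmf (2 * n + 1) (S n + i) s).

Lemma trinomial_sum_marginal D (P : nat -> bool) p q :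
  sumR (S D) (fun a => sumR (S (D - a)) (fun b =>
    if P (a + b)%nat then multinom a b (D - a - b) * p ^ a * q ^ b * (1 - p - q) ^ (D - a - b)
    else 0))
  = sumR (S D) (fun j => if P j then binom_pmf D j (p + q) else 0).
Proof.
  set (h := fun a j => if P j then
    multinom a (j - a) (D - j) * p ^ a * q ^ (j - a) * (1 - p - q) ^ (D - j) else 0).
  rewrite (sumR_ext _ _ (fun a => sumR (S (D - a)) (fun b => h a (a + b)%nat))).
  2:{ intros a Ha. apply sumR_ext. intros b Hb. unfold h.
      replace (a + b - a)%nat with b by lia.
      replace (D - (a + b))%nat with (D - a - b)%nat by lia. reflexivity. }
  rewrite sumR_diag. apply sumR_ext. intros j Hj. unfold h.
  destruct (P j); [|now apply sumR_eq0].
  unfold binom_pmf. replace (1 - (p + q)) with (1 - p - q) by ring.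
  rewrite <- binomial_sumR.
  transitivity (sumR (S j) (fun a => C D j * (1 - p - q) ^ (D - j) * (C j a * p ^ a * q ^ (j - a)))).
  - apply sumR_ext. intros a Ha. rewrite multinom_C_sum.
    replace (a + (j - a) + (D - j))%nat with D by lia.
    replace (a + (j - a))%nat with j by lia. ring.
  - rewrite sumR_scal. ring.
Qed.

Lemma trinomial_sum_first D a p q : (a <= D)%nat ->
  sumR (S (D - a)) (fun b => multinom a b (D - a - b) * p ^ a * q ^ b * (1 - p - q) ^ (D - a - b))
  = binom_pmf D a p.
Proof.
  intros Ha. unfold binom_pmf.
  replace ((1 - p) ^ (D - a)) with ((q + (1 - p - q)) ^ (D - a)) by (f_equal; ring).
  rewrite <- binomial_sumR, <- sumR_scal.
  apply sumR_ext. intros b Hb. rewrite multinom_C_first.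
  replace (a + b + (D - a - b))%nat with D by lia.
  replace (b + (D - a - b))%nat with (D - a)%nat by lia. ring.
Qed.

Lemma bin_majority_tail n s :
  sumR (S (2 * n + 1)) (fun j => if Nat.leb (S n) j then binom_pmf (2 * n + 1) j s else 0)
  = bin_majority n s.
Proof.
  rewrite sumR_halves, sumR_eq0, Rplus_0_l.
  - apply sumR_ext. intros i Hi. destruct (Nat.leb_spec (S n) (S n + i)); [reflexivity|lia].
  - intros i Hi. destruct (Nat.leb_spec (S n) i); [lia|reflexivity].
Qed.

Lemma medpois_pmf_majority mu n k :
  medpois_pmf mu n k = bin_majority n (pois_lt mu (S k)) - bin_majority n (pois_lt mu k).
Proof.
  unfold medpois_pmf, pois_gt. cbv zeta.
  set (p := pois_lt mu k). set (q := pois_pmf mu k).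
  change (pois_lt mu (S k)) with (p + q).
  set (row := fun a => sumR (S (2 * n + 1 - a)) (fun b =>
    if Nat.leb (S n) (a + b) then
      multinom a b (2 * n + 1 - a - b) * p ^ a * q ^ b * (1 - p - q) ^ (2 * n + 1 - a - b)
    else 0)).
  pose proof (trinomial_sum_marginal (2 * n + 1) (Nat.leb (S n)) p q) as Hall.
  fold row in Hall. rewrite bin_majority_tail, sumR_halves in Hall.
  assert (Hhigh : sumR (S n) (fun i => row (S n + i)%nat) = bin_majority n p).
  { apply sumR_ext. intros i Hi. unfold row. rewrite <- (trinomial_sum_first _ _ _ q) by lia.
    apply sumR_ext. intros b Hb. destruct (Nat.leb_spec (S n) (S n + i + b)); [reflexivity|lia]. }
  lra.
Qed.

Lemma binom_pmf_sum D s : sumR (S D) (fun j => binom_pmf D j s) = 1.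
Proof.
  unfold binom_pmf. rewrite binomial_sumR. replace (s + (1 - s)) with 1 by ring. apply pow1.
Qed.

Lemma bin_majority_compl n s : bin_majority n s + bin_majority n (1 - s) = 1.
Proof.
  pose proof (binom_pmf_sum (2 * n + 1) s) as Htotal. rewrite sumR_halves in Htotal.
  enough (bin_majority n (1 - s) = sumR (S n) (fun j => binom_pmf (2 * n + 1) j s))
    by (unfold bin_majority at 1; lra).
  unfold bin_majority. rewrite (sumR_rev (S n) (fun j => binom_pmf (2 * n + 1) j s)).
  apply sumR_ext. intros i Hi. unfold binom_pmf.
  rewrite (Binomial.pascal_step1 (2 * n + 1) (S n + i)) by lia.
  replace (2 * n + 1 - (S n + i))%nat with (S n - 1 - i)%nat by lia.
  replace (2 * n + 1 - (S n - 1 - i))%nat with (S n + i)%nat by lia.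
  replace (1 - (1 - s)) with s by ring. ring.
Qed.

Lemma bin_majority_half n : bin_majority n (1 / 2) = 1 / 2.
Proof.
  pose proof (bin_majority_compl n (1 / 2)) as H.
  replace (1 - 1 / 2) with (1 / 2) in H by field. lra.
Qed.

Lemma bin_majority_nonneg n s : 0 <= s <= 1 -> 0 <= bin_majority n s.
Proof.
  intros Hs. apply sumR_nonneg. intros i _. unfold binom_pmf.
  apply Rmult_le_pos; [apply Rmult_le_pos|]; try apply C_nonneg; apply pow_le; lra.
Qed.

Lemma binom_pmf_upper_le n i s : 0 <= s <= 1 / 2 -> (i <= n)%nat ->
  binom_pmf (2 * n + 1) (S n + i) s <= C (2 * n + 1) (S n + i) * (s ^ S n * (1 - s) ^ n).
Proof.
  intros Hs Hi. unfold binom_pmf.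
  replace (2 * n + 1 - (S n + i))%nat with (n - i)%nat by lia.
  replace ((1 - s) ^ n) with ((1 - s) ^ i * (1 - s) ^ (n - i))
    by (rewrite <- pow_add; f_equal; lia).
  rewrite pow_add.
  assert (s ^ i <= (1 - s) ^ i) by (apply pow_incr; lra).
  assert (0 <= C (2 * n + 1) (S n + i) * s ^ S n * (1 - s) ^ (n - i)).
  { apply Rmult_le_pos; [apply Rmult_le_pos|]; try apply C_nonneg; apply pow_le; lra. }
  nra.
Qed.

Lemma sumR_C_upper_le n : sumR (S n) (fun i => C (2 * n + 1) (S n + i)) <= 2 ^ (2 * n + 1).
Proof.
  replace 2 with (1 + 1) by ring. rewrite <- binomial_sumR, sumR_halves.
  assert (0 <= sumR (S n) (fun i => C (2 * n + 1) i * 1 ^ i * 1 ^ (2 * n + 1 - i))).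
  { apply sumR_nonneg. intros. rewrite !pow1, !Rmult_1_r. apply C_nonneg. }
  enough (sumR (S n) (fun i => C (2 * n + 1) (S n + i)) =
          sumR (S n) (fun i => C (2 * n + 1) (S n + i) * 1 ^ (S n + i) * 1 ^ (2 * n + 1 - (S n + i))))
    by lra.
  apply sumR_ext. intros. rewrite !pow1. ring.
Qed.

Lemma bin_majority_le n s : 0 <= s <= 1 / 2 -> bin_majority n s <= 2 * s * (4 * s * (1 - s)) ^ n.
Proof.
  intros Hs.
  assert (Hst : 0 <= s ^ S n * (1 - s) ^ n) by (apply Rmult_le_pos; apply pow_le; lra).
  apply Rle_trans with (sumR (S n) (fun i => (s ^ S n * (1 - s) ^ n) * C (2 * n + 1) (S n + i))).
  { apply sumR_le. intros i Hi. rewrite Rmult_comm. apply binom_pmf_upper_le; [lra|lia]. }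
  rewrite sumR_scal.
  apply Rle_trans with (s ^ S n * (1 - s) ^ n * 2 ^ (2 * n + 1)).
  { apply Rmult_le_compat_l; [exact Hst|apply sumR_C_upper_le]. }
  right. replace 4 with (2 ^ 2) by ring.
  rewrite pow_add, pow_mult, !Rpow_mult_distr. change (s ^ S n) with (s * s ^ n). ring.
Qed.

Lemma bin_majority_cv0 s : 0 <= s < 1 / 2 -> Un_cv (fun n => bin_majority n s) 0.
Proof.
  intros Hs eps Heps.
  assert (Hr : Rabs (4 * s * (1 - s)) < 1) by (rewrite Rabs_right; nra).
  destruct (pow_lt_1_zero _ Hr eps Heps) as [N HN].
  exists N. intros n Hn. unfold R_dist. rewrite Rminus_0_r.
  specialize (HN n Hn).
  pose proof (bin_majority_le n s ltac:(lra)). pose proof (bin_majority_nonneg n s ltac:(lra)).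
  assert (0 <= (4 * s * (1 - s)) ^ n) by (apply pow_le; nra).
  rewrite Rabs_right in HN by lra. rewrite Rabs_right by lra. nra.
Qed.

Lemma bin_majority_cv1 s : 1 / 2 < s <= 1 -> Un_cv (fun n => bin_majority n s) 1.
Proof.
  intros Hs eps Heps. destruct (bin_majority_cv0 (1 - s) ltac:(lra) eps Heps) as [N HN].
  exists N. intros n Hn. specialize (HN n Hn). unfold R_dist in *.
  pose proof (bin_majority_compl n s).
  replace (bin_majority n s - 1) with (- (bin_majority n (1 - s) - 0)) by lra.
  now rewrite Rabs_Ropp.
Qed.

Lemma bin_majority_cv_half : Un_cv (fun n => bin_majority n (1 / 2)) (1 / 2).
Proof.
  intros eps Heps. exists O. intros n _.
  unfold R_dist. now rewrite bin_majority_half, Rminus_diag, Rabs_R0.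
Qed.

Lemma pois_pmf_nonneg mu k : 0 <= mu -> 0 <= pois_pmf mu k.
Proof.
  intros Hmu. unfold pois_pmf. apply Rmult_le_pos; [apply Rmult_le_pos|].
  - apply Rlt_le, exp_pos.
  - now apply pow_le.
  - apply Rlt_le, Rinv_0_lt_compat, INR_fact_lt_0.
Qed.

Lemma pois_pmf_pos mu k : 0 < mu -> 0 < pois_pmf mu k.
Proof.
  intros Hmu. unfold pois_pmf. apply Rmult_lt_0_compat; [apply Rmult_lt_0_compat|].
  - apply exp_pos.
  - now apply pow_lt.
  - apply Rinv_0_lt_compat, INR_fact_lt_0.
Qed.

Lemma is_derive_pois_pmf_S k x :
  is_derive (fun y => pois_pmf y (S k)) x (pois_pmf x k - pois_pmf x (S k)).
Proof.
  unfold pois_pmf. auto_derive; [exact I|].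
  change (match k with 0%nat => 1 | S _ => INR k + 1 end) with (INR (S k)).
  change (Factorial.fact (S k)) with (Factorial.fact k + k * Factorial.fact k)%nat.
  rewrite plus_INR, mult_INR, S_INR. change (x ^ S k) with (x * x ^ k).
  pose proof (INR_fact_lt_0 k). pose proof (pos_INR k).
  field. split; [nra|lra].
Qed.

Lemma is_derive_pois_lt_S k x : is_derive (fun y => pois_lt y (S k)) x (- pois_pmf x k).
Proof.
  induction k as [|k IH].
  - unfold pois_lt, pois_pmf. simpl. auto_derive; [exact I|]. simpl. field.
  - replace (- pois_pmf x (S k)) with (- pois_pmf x k + (pois_pmf x k - pois_pmf x (S k))) by ring.
    apply (is_derive_plus (fun y => pois_lt y (S k)) (fun y => pois_pmf y (S k))).
    + exact IH.
    + apply is_derive_pois_pmf_S.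
Qed.

Lemma pois_lt_S mu k : pois_lt mu (S k) = pois_lt mu k + pois_pmf mu k.
Proof. reflexivity. Qed.

Lemma pois_lt_nonneg mu k : 0 <= mu -> 0 <= pois_lt mu k.
Proof.
  intros Hmu. apply sumR_nonneg. intros. now apply pois_pmf_nonneg.
Qed.

Lemma pois_lt_at_0 k : pois_lt 0 (S k) = 1.
Proof.
  induction k as [|k IH].
  - unfold pois_lt, pois_pmf. simpl. rewrite Ropp_0, exp_0. field.
  - rewrite pois_lt_S, IH.
    unfold pois_pmf. rewrite pow_i by lia. unfold Rdiv. ring.
Qed.

Lemma pois_lt_antitone k x y : 0 <= x <= y -> pois_lt y (S k) <= pois_lt x (S k).
Proof.
  intros [Hx Hxy]. destruct (Rle_lt_or_eq_dec _ _ Hxy) as [Hlt|<-]; [|lra].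
  destruct (MVT_cor2 (fun t => pois_lt t (S k)) (fun t => - pois_pmf t k) x y Hlt)
    as (c & Hc & Hxc).
  { intros c _. apply is_derive_Reals, is_derive_pois_lt_S. }
  pose proof (pois_pmf_nonneg c k ltac:(lra)).
  assert (0 <= pois_pmf c k * (y - x)) by (apply Rmult_le_pos; lra).
  lra.
Qed.

Lemma pois_lt_le_1 mu k : 0 <= mu -> pois_lt mu k <= 1.
Proof.
  intros Hmu. destruct k as [|k]; [unfold pois_lt; simpl; lra|].
  rewrite <- (pois_lt_at_0 k). apply pois_lt_antitone. lra.
Qed.

Lemma pois_lt_mono mu k k' : 0 <= mu -> (k <= k')%nat -> pois_lt mu k <= pois_lt mu k'.
Proof.
  intros Hmu Hk. induction Hk as [|k' _ IH]; [lra|].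
  rewrite pois_lt_S.
  pose proof (pois_pmf_nonneg mu k' Hmu). lra.
Qed.

(** * Medians of the Poisson distribution *)

Definition pow_div_fact (x : R) (j : nat) : R := x ^ j / INR (Factorial.fact j).

Lemma pow_div_fact_S x j : pow_div_fact x (S j) = pow_div_fact x j * (x / INR (S j)).
Proof.
  unfold pow_div_fact. change (Factorial.fact (S j)) with (S j * Factorial.fact j)%nat.
  rewrite mult_INR. change (x ^ S j) with (x * x ^ j).
  pose proof (INR_fact_lt_0 j). pose proof (lt_0_INR (S j) ltac:(lia)).
  field. lra.
Qed.

Lemma pow_div_fact_pos x j : 0 < x -> 0 < pow_div_fact x j.
Proof. intros Hx. apply Rdiv_lt_0_compat; [now apply pow_lt|apply INR_fact_lt_0]. Qed.

Lemma pois_lt_pow_div_fact x n : pois_lt x n = exp (- x) * sumR n (pow_div_fact x).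
Proof.
  unfold pois_lt. rewrite <- sumR_scal. apply sumR_ext. intros. unfold pois_pmf, pow_div_fact, Rdiv. ring.
Qed.

(* Going outwards from the two equal central terms [j = g] and [j = g+1], the
   ratios are [(g-i)/(g+1)] on the left and [(g+1)/(g+i+2)] on the right, and
   [(g-i)(g+i+2) <= (g+1)^2]. *)
Lemma pow_div_fact_mirror g i : (i <= g)%nat ->
  pow_div_fact (INR (S g)) (g - i) <= pow_div_fact (INR (S g)) (S g + i).
Proof.
  set (x := INR (S g)). assert (Hx : 0 < x) by (apply lt_0_INR; lia).
  induction i as [|i IH]; intros Hi.
  - rewrite Nat.sub_0_r, Nat.add_0_r, pow_div_fact_S. right. unfold x. field. apply not_0_INR. lia.
  - assert (Hu : 0 < INR (g - i)) by (apply lt_0_INR; lia).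
    assert (Hv : 0 < INR (S (S g + i))) by (apply lt_0_INR; lia).
    assert (Hleft : pow_div_fact x (g - S i) = pow_div_fact x (g - i) * (INR (g - i) / x)).
    { replace (g - i)%nat with (S (g - S i)) in * by lia. rewrite pow_div_fact_S. field. lra. }
    assert (Hratio : INR (g - i) / x <= x / INR (S (S g + i))).
    { replace (INR (g - i) / x) with (INR (g - i) * INR (S (S g + i)) / (x * INR (S (S g + i))))
        by (field; lra).
      replace (x / INR (S (S g + i))) with (x * x / (x * INR (S (S g + i)))) by (field; lra).
      apply Rmult_le_compat_r; [apply Rlt_le, Rinv_0_lt_compat; nra|].
      unfold x. rewrite <- !mult_INR. apply le_INR. nia. }
    rewrite Hleft. replace (S g + S i)%nat with (S (S g + i)) by lia. rewrite pow_div_fact_S.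
    apply Rmult_le_compat.
    + apply Rlt_le, pow_div_fact_pos, Hx.
    + apply Rlt_le, Rdiv_lt_0_compat; assumption.
    + apply IH. lia.
    + exact Hratio.
Qed.

Lemma pois_lt_lt_half_at_integer g : pois_lt (INR (S g)) (S g) < 1 / 2.
Proof.
  set (x := INR (S g)). assert (Hx : 0 < x) by (apply lt_0_INR; lia).
  set (upper := exp (- x) * sumR (S g) (fun i => pow_div_fact x (S g + i))).
  assert (Hsplit : pois_lt x (S g + S g) = pois_lt x (S g) + upper).
  { unfold upper. rewrite !pois_lt_pow_div_fact, sumR_add. ring. }
  assert (Hlt1 : pois_lt x (S g + S g) < 1).
  { pose proof (pois_lt_le_1 x (S (S g + S g)) ltac:(lra)) as Hle1.
    rewrite pois_lt_S in Hle1. pose proof (pois_pmf_pos x (S g + S g) Hx). lra. }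
  assert (Hmirror : pois_lt x (S g) <= upper).
  { unfold upper. rewrite pois_lt_pow_div_fact.
    apply Rmult_le_compat_l; [apply Rlt_le, exp_pos|].
    rewrite sumR_rev. apply sumR_le. intros i Hi.
    replace (S g - 1 - i)%nat with (g - i)%nat by lia. apply pow_div_fact_mirror. lia. }
  lra.
Qed.

Lemma pois_lt_lt_half mu f : 0 <= mu -> INR f <= mu -> pois_lt mu f < 1 / 2.
Proof.
  intros Hmu Hf. destruct f as [|g]; [unfold pois_lt; simpl; lra|].
  eapply Rle_lt_trans; [|apply pois_lt_lt_half_at_integer].
  apply pois_lt_antitone. split; [apply pos_INR|exact Hf].
Qed.

Lemma ln_ratio_gt mu c : 0 < c < mu -> 2 * c < mu * (ln (mu + c) - ln (mu - c)).
Proof.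
  intros Hc.
  destruct (MVT_cor2 (fun u => mu * (ln (mu + u) - ln (mu - u)) - 2 * u)
              (fun u => mu * (/ (mu + u) + / (mu - u)) - 2) 0 c ltac:(lra)) as (d & Hd & Hdc).
  { intros t Ht. apply is_derive_Reals. auto_derive; [repeat split; lra|]. field. split; lra. }
  rewrite Rplus_0_r, Rminus_0_r, Rminus_diag, !Rmult_0_r, Rminus_0_r in Hd.
  assert (0 < mu * (/ (mu + d) + / (mu - d)) - 2).
  { replace (mu * (/ (mu + d) + / (mu - d)) - 2) with (2 * d * d / ((mu + d) * (mu - d)))
      by (field; split; lra).
    apply Rdiv_lt_0_compat; nra. }
  nra.
Qed.

Lemma pois_pmf_lt_shift mu n c : 0 < c < mu -> mu <= INR n ->
  pois_pmf (mu - c) n < pois_pmf (mu + c) n.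
Proof.
  intros Hc Hn. unfold pois_pmf, Rdiv.
  apply Rmult_lt_compat_r; [apply Rinv_0_lt_compat, INR_fact_lt_0|].
  rewrite <- (Rpower_pow n (mu - c)), <- (Rpower_pow n (mu + c)) by lra.
  unfold Rpower. rewrite <- !exp_plus. apply exp_increasing.
  pose proof (ln_ratio_gt mu c Hc).
  assert (ln (mu - c) < ln (mu + c)) by (apply ln_increasing; lra).
  assert (mu * (ln (mu + c) - ln (mu - c)) <= INR n * (ln (mu + c) - ln (mu - c)))
    by (apply Rmult_le_compat_r; lra).
  lra.
Qed.

Lemma is_derive_pois_lt_sym n mu u :
  is_derive (fun v => pois_lt (mu + v) (S n) + pois_lt (mu - v) (S n)) u
    (pois_pmf (mu - u) n - pois_pmf (mu + u) n).
Proof.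
  replace (pois_pmf (mu - u) n - pois_pmf (mu + u) n)
    with (1 * - pois_pmf (mu + u) n + (-1) * - pois_pmf (mu - u) n) by ring.
  apply (is_derive_plus (fun v => pois_lt (mu + v) (S n)) (fun v => pois_lt (mu - v) (S n))).
  - apply (is_derive_comp (fun y => pois_lt y (S n)) (fun v => mu + v)).
    + apply is_derive_pois_lt_S.
    + auto_derive; [exact I|ring].
  - apply (is_derive_comp (fun y => pois_lt y (S n)) (fun v => mu - v)).
    + apply is_derive_pois_lt_S.
    + auto_derive; [exact I|ring].
Qed.

(* [u |-> P(X_{mu+u} <= n) + P(X_{mu-u} <= n)] decreases on [0, mu] from
   [2 P(X_mu <= n)] to [P(X_{2mu} <= n) + 1]. *)
Lemma pois_lt_ge_half mu n : 0 < mu -> mu <= INR n -> 1 / 2 <= pois_lt mu (S n).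
Proof.
  intros Hmu Hn.
  destruct (MVT_cor2 (fun v => pois_lt (mu + v) (S n) + pois_lt (mu - v) (S n))
              (fun v => pois_pmf (mu - v) n - pois_pmf (mu + v) n) 0 mu Hmu) as (c & Hc & Hcmu).
  { intros t _. apply is_derive_Reals, is_derive_pois_lt_sym. }
  rewrite Rplus_0_r, Rminus_0_r, Rminus_diag, pois_lt_at_0 in Hc.
  pose proof (pois_pmf_lt_shift mu n c Hcmu Hn).
  assert ((pois_pmf (mu - c) n - pois_pmf (mu + c) n) * (mu - 0) < 0)
    by (apply Rmult_neg_pos; lra).
  pose proof (pois_lt_nonneg (mu + mu) (S n) ltac:(lra)).
  lra.
Qed.

Lemma pois_median_exists mu : 0 < mu ->
  exists m, floor_or_ceil mu m /\ pois_lt mu m < 1 / 2 /\ 1 / 2 <= pois_lt mu (S m).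
Proof.
  intros Hmu. destruct (nfloor_ex mu ltac:(lra)) as [f Hf].
  destruct (Rlt_le_dec (pois_lt mu (S f)) (1 / 2)) as [Hlt|Hge].
  - exists (S f). repeat split.
    + assert (INR f <> mu) by (intros Hint; pose proof (pois_lt_ge_half mu f Hmu ltac:(lra)); lra).
      right. unfold is_ceil. rewrite S_INR. lra.
    + exact Hlt.
    + apply pois_lt_ge_half; [exact Hmu|]. rewrite S_INR. lra.
  - exists f. repeat split.
    + left. exact Hf.
    + apply pois_lt_lt_half; lra.
    + exact Hge.
Qed.

(** * The limit law of the sample median *)

Lemma medpois_pmf_cv mu k a b :
  Un_cv (fun n => bin_majority n (pois_lt mu (S k))) a ->
  Un_cv (fun n => bin_majority n (pois_lt mu k)) b ->
  Un_cv (fun n => medpois_pmf mu n k) (a - b).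
Proof.
  intros Ha Hb.
  apply (Un_cv_ext (fun n => bin_majority n (pois_lt mu (S k)) - bin_majority n (pois_lt mu k))).
  - intros n. symmetry. apply medpois_pmf_majority.
  - now apply CV_minus.
Qed.

Lemma medpois_pmf_cv_median mu m c :
  0 < mu -> pois_lt mu m < 1 / 2 <= pois_lt mu (S m) ->
  Un_cv (fun n => bin_majority n (pois_lt mu (S m))) c ->
  forall k, Un_cv (fun n => medpois_pmf mu n k) (c * point_mass m k + (1 - c) * point_mass (S m) k).
Proof.
  intros Hmu [Hlo Hhi] Hc k.
  assert (Hbelow : forall j, (j <= m)%nat -> Un_cv (fun n => bin_majority n (pois_lt mu j)) 0).
  { intros j Hj. apply bin_majority_cv0. split; [apply pois_lt_nonneg; lra|].
    pose proof (pois_lt_mono mu j m ltac:(lra) Hj). lra. }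
  assert (Habove : forall j, (S (S m) <= j)%nat -> Un_cv (fun n => bin_majority n (pois_lt mu j)) 1).
  { intros j Hj. apply bin_majority_cv1. split; [|apply pois_lt_le_1; lra].
    pose proof (pois_lt_mono mu _ j ltac:(lra) Hj) as Hmono. rewrite pois_lt_S in Hmono.
    pose proof (pois_pmf_pos mu (S m) Hmu). lra. }
  unfold point_mass.
  destruct (lt_eq_lt_dec k m) as [[Hk | <-] | Hk].
  - rewrite (proj2 (Nat.eqb_neq k m)), (proj2 (Nat.eqb_neq k (S m))) by lia.
    replace (c * 0 + (1 - c) * 0) with (0 - 0) by ring.
    apply medpois_pmf_cv; apply Hbelow; lia.
  - rewrite Nat.eqb_refl, (proj2 (Nat.eqb_neq k (S k))) by lia.
    replace (c * 1 + (1 - c) * 0) with (c - 0) by ring.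
    apply medpois_pmf_cv; [exact Hc | apply Hbelow; lia].
  - destruct (Nat.eq_dec k (S m)) as [-> | Hk'].
    + rewrite (proj2 (Nat.eqb_neq (S m) m)), Nat.eqb_refl by lia.
      replace (c * 0 + (1 - c) * 1) with (1 - c) by ring.
      apply medpois_pmf_cv; [apply Habove; lia | exact Hc].
    + rewrite (proj2 (Nat.eqb_neq k m)), (proj2 (Nat.eqb_neq k (S m))) by lia.
      replace (c * 0 + (1 - c) * 0) with (1 - 1) by ring.
      apply medpois_pmf_cv; apply Habove; lia.
Qed.

Lemma unif2_point_mass m k : unif2 m k = (point_mass m k + point_mass (S m) k) / 2.
Proof.
  unfold unif2, point_mass.
  destruct (Nat.eqb_spec k m), (Nat.eqb_spec k (S m)); simpl; try lia; field.
Qed.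

Theorem mainTheorem4 (mu : R) (hmu : 0 < mu) :
  exists q : nat -> R,
    (forall k : nat, Un_cv (fun n : nat => medpois_pmf mu n k) (q k)) /\
    ((exists m : nat, floor_or_ceil mu m /\ q = point_mass m) \/
     (exists m : nat, (floor_or_ceil mu m \/ floor_or_ceil mu (S m)) /\ q = unif2 m)).
Proof.
  destruct (pois_median_exists mu hmu) as (m & Hfloor & Hlo & Hhi).
  destruct (Rle_lt_or_eq_dec _ _ Hhi) as [Hgt | Hhalf].
  - exists (point_mass m). split; [|left; exists m; split; [exact Hfloor | reflexivity]].
    intros k.
    replace (point_mass m k) with (1 * point_mass m k + (1 - 1) * point_mass (S m) k) by ring.
    apply medpois_pmf_cv_median; [exact hmu | lra |].
    apply bin_majority_cv1. split; [exact Hgt | apply pois_lt_le_1; lra].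
  - exists (unif2 m). split; [|right; exists m; split; [left; exact Hfloor | reflexivity]].
    intros k. rewrite unif2_point_mass.
    replace ((point_mass m k + point_mass (S m) k) / 2)
      with (1 / 2 * point_mass m k + (1 - 1 / 2) * point_mass (S m) k) by field.
    apply medpois_pmf_cv_median; [exact hmu | lra |].
    rewrite <- Hhalf. apply bin_majority_cv_half.
Qed.
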